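(* Let $(M,\circ)$ be a fuzzy $\Gamma$-hypersemigroup, and define for $a,b\in M$, $\gamma\in\Gamma$: $a\ast\gamma\ast b=\{x\in M : (a\circ\gamma\circ b)(x)>0\}$. Then $(M,\ast)$ is a $\Gamma$-hypersemigroup.
   Context: $M,\Gamma$ are nonempty sets; a fuzzy subset of $M$ is a map $M\to[0,1]$. A fuzzy $\Gamma$-hyperoperation assigns to each $(a,\gamma,b)\in M\times\Gamma\times M$ a fuzzy subset $a\circ\gamma\circ b$. For $a\in M$ and fuzzy $\mu$: $(a\circ\gamma\circ\mu)(r)=\bigvee_{t\in M}((a\circ\gamma\circ t)(r)\wedge\mu(t))$ if $\mu\ne0$, else $0$; $(\mu\circ\gamma\circ a)(r)=\bigvee_{t\in M}(\mu(t)\wedge(t\circ\gamma\circ a)(r))$ if $\mu\ne0$, else $0$. $(M,\circ)$ is a fuzzy $\Gamma$-hypersemigroup if $(a\circ\alpha\circ b)\circ\beta\circ c=a\circ\alpha\circ(b\circ\beta\circ c)$ for all $a,b,c\in M$, $\alpha,\beta\in\Gamma$. A $\Gamma$-hypersemigroup is a set $M$ together with, for each $\gamma\in\Gamma$, a map $(x,y)\mapsto x\gamma y\subseteq M$, extended to subsets by $A\gamma B=\bigcup_{a\in A,b\in B}a\gamma b$, satisfying $(x\alpha y)\beta z=x\alpha(y\beta z)$ for all $x,y,z\in M$, $\alpha,\beta\in\Gamma$. *)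

From HB Require Import structures.
From mathcomp Require Import all_boot all_order all_algebra.
From mathcomp Require Import all_classical all_reals.
Set Implicit Arguments. Unset Strict Implicit. Unset Printing Implicit Defensive.
Import Order.TTheory GRing.Theory Num.Theory.
Local Open Scope classical_set_scope.
Local Open Scope ring_scope.

Definition fuzzy_subset (R : realType) (M : Type) (mu : M -> R) : Prop :=
  forall x, 0 <= mu x <= 1.

Definition fuzzy_Gamma_hyperop (R : realType) (M G : Type)
  (hop : M -> G -> M -> M -> R) : Prop :=
  forall a g b, fuzzy_subset (hop a g b).

Definition fz_left (R : realType) (M G : Type) (hop : M -> G -> M -> M -> R)
  (a : M) (g : G) (mu : M -> R) : M -> R :=
  fun r => if `[< exists t, mu t != 0 >]
           then sup [set Order.min (hop a g t r) (mu t) | t in [set: M]]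
           else 0.

Definition fz_right (R : realType) (M G : Type) (hop : M -> G -> M -> M -> R)
  (mu : M -> R) (g : G) (a : M) : M -> R :=
  fun r => if `[< exists t, mu t != 0 >]
           then sup [set Order.min (mu t) (hop t g a r) | t in [set: M]]
           else 0.

Definition fuzzy_Gamma_hypersemigroup (R : realType) (M G : Type)
  (hop : M -> G -> M -> M -> R) : Prop :=
  fuzzy_Gamma_hyperop hop /\
  forall (a b c : M) (al be : G),
    fz_right hop (hop a al b) be c = fz_left hop a al (hop b be c).

Definition set_hop (M G : Type) (hop : M -> G -> M -> set M)
  (A : set M) (g : G) (B : set M) : set M :=
  \bigcup_(a in A) \bigcup_(b in B) hop a g b.

Definition Gamma_hypersemigroup (M G : Type) (hop : M -> G -> M -> set M) : Prop :=
  forall (x y z : M) (al be : G),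
    set_hop hop (hop x al y) be [set z] = set_hop hop [set x] al (hop y be z).

Definition support_hop (R : realType) (M G : Type) (hop : M -> G -> M -> M -> R)
  : M -> G -> M -> set M :=
  fun a g b => [set x | 0 < hop a g b x].

(** For a nonempty family of values bounded above, the supremum is positive
    iff some value is.  Hence [(mu o gamma o a)(w) > 0] iff [mu t > 0] and
    [(t o gamma o a)(w) > 0] for some [t], and symmetrically for
    [a o gamma o mu]; so both sides of the associativity law of the
    support hyperoperation are the supports of the two sides of the fuzzy
    associativity law, which coincide. *)
From mathcomp Require Import all_boot all_order all_algebra.
From mathcomp Require Import all_classical all_reals.
Import Order.TTheory GRing.Theory Num.Theory.
Local Open Scope classical_set_scope.
Local Open Scope ring_scope.

Section PositiveSup.
Variables (R : realType) (M : Type).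
Hypothesis M_inhabited : inhabited M.

Lemma sup_image_gt0 (h : M -> R) (C : R) : (forall t, h t <= C) ->
  (0 < sup [set h t | t in [set: M]]) <-> exists t, 0 < h t.
Proof.
case: M_inhabited => m hC; split.
- move=> sup_gt0; apply/not_existsP => h_le0.
  have : sup [set h t | t in [set: M]] <= 0.
    apply: ge_sup; first by exists (h m), m.
    by move=> _ [t _ <-]; rewrite leNgt; apply/negP => /h_le0.
  by rewrite leNgt sup_gt0.
- move=> [t ht_gt0]; apply: (lt_le_trans ht_gt0); apply: ub_le_sup.
  + by exists C => _ [u _ <-].
  + by exists t.
Qed.

(* The guard is harmless: any witness on the right makes [g] nonzero. *)
Lemma guarded_sup_min_gt0 (f g : M -> R) : (forall t, f t <= 1) ->
  (0 < (if `[< exists t, g t != 0 >]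
        then sup [set Order.min (f t) (g t) | t in [set: M]] else 0))
  <-> exists t, 0 < f t /\ 0 < g t.
Proof.
move=> f_le1; case: asboolP => [_|g_eq0].
- rewrite (@sup_image_gt0 _ 1); last by move=> t; rewrite ge_min f_le1.
  by split=> -[t min_gt0]; exists t; move: min_gt0; rewrite lt_min => /andP.
- rewrite ltxx; split=> // -[t [_ gt_gt0]].
  by case: g_eq0; exists t; rewrite gt_eqF.
Qed.

End PositiveSup.

Section FuzzySupport.
Variables (R : realType) (M G : Type) (hop : M -> G -> M -> M -> R).
Hypotheses (M_inhabited : inhabited M) (hop_fuzzy : fuzzy_Gamma_hyperop hop).

Lemma fz_left_gt0 a g mu r :
  0 < fz_left hop a g mu r <-> exists t, 0 < hop a g t r /\ 0 < mu t.
Proof.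
apply: guarded_sup_min_gt0 => // t.
by case/andP: (hop_fuzzy a g t r).
Qed.

Lemma fz_right_gt0 mu g a r :
  0 < fz_right hop mu g a r <-> exists t, 0 < mu t /\ 0 < hop t g a r.
Proof.
rewrite /fz_right; under eq_imagel do rewrite minC.
rewrite guarded_sup_min_gt0 //; last by move=> t; case/andP: (hop_fuzzy t g a r).
by split=> -[t [? ?]]; exists t.
Qed.

Lemma set_hop_support_l x al y be z :
  set_hop (support_hop hop) (support_hop hop x al y) be [set z]
  = [set w | 0 < fz_right hop (hop x al y) be z w].
Proof.
apply/seteqP; split=> w /=.
- by move=> [t xy_t [_ -> tz_w]]; apply/fz_right_gt0; exists t.
- by move/fz_right_gt0 => [t [xy_t tz_w]]; exists t => //; exists z.
Qed.

Lemma set_hop_support_r x al y be z :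
  set_hop (support_hop hop) [set x] al (support_hop hop y be z)
  = [set w | 0 < fz_left hop x al (hop y be z) w].
Proof.
apply/seteqP; split=> w /=.
- by move=> [_ -> [t yz_t xt_w]]; apply/fz_left_gt0; exists t.
- by move/fz_left_gt0 => [t [xt_w yz_t]]; exists x => //; exists t.
Qed.

End FuzzySupport.

Theorem theorem4p17 (R : realType) (M G : Type)
  (hop : M -> G -> M -> M -> R) :
  inhabited M -> inhabited G ->
  fuzzy_Gamma_hypersemigroup hop ->
  Gamma_hypersemigroup (support_hop hop).
Proof.
move=> M_inhabited _ [hop_fuzzy hop_assoc] x y z al be.
by rewrite set_hop_support_l // set_hop_support_r // hop_assoc.
Qed.
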